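(* Fix $1\le i\le h$ and let $\hat F_i\subseteq B_i$ be such that $\hat G_i=(V(T_i),\hat F_i)$ is a forest of stars. Let $L_i$ be the set of vertices of $T_i$ that are leaves of some star of $\hat G_i$, where for a star with a single edge one of its two endpoints (arbitrarily chosen) is regarded as its leaf. Then $r(\hat F_i)\ge\sum_{v\in L_i}c_i(v_0,v)$.
   Context: $\mathsf{StackMST}(\gamma,\Delta)$: given a tree $T=(V,E(T))$ with red edge costs $c(e)\ge0$, activation costs $\gamma(e)\ge0$ for every pair $e\notin E(T)$, and a budget $\Delta$; the leader activates and prices new edges, the follower takes a minimum spanning tree breaking ties in favor of the leader, whose revenue is the total price of selected new edges. For a red (multi)graph tree with costs $c'$ and a set $F$ of added edges, define for $e\in F$: $p_F(e)=\min_H\max_{e'\in E(H)\text{ red}}c'(e')$ over all simple cycles $H$ containing $e$ in the multigraph of red edges plus $F$; $r(F)$ is the leader's revenue when activating $F$ priced by $p_F$. Root $T$ at its center $v_0$; $h$ is its height. For $1\le i\le h$, $V_i=\{v_1,\dots,v_{\ell_i}\}$ are the vertices at depth $i$, $E_i$ the edges joining them to their parents; $T_i$ is the red star centered at $v_0$ with leaves $v_1,\dots,v_{\ell_i}$ and costs $c_i(v_0,v)=c(u,v)$, $u$ the parent of $v$ in $T$; by convention $c_i(v_0,v_0)=0$. Let $\hat T_0,\dots,\hat T_{\ell_i}$ be the components of $T-E_i$, $v_0\in\hat T_0$, $v_j\in\hat T_j$; for $j\ne q$, $B_i$ contains the edge $(v_j,v_q)$ whenever some pair not in $E(T)$ joins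 $\hat T_j$ and $\hat T_q$ (edges $(v_0,v_q)$ are parallel to red edges). $r(\hat F_i)$ is computed in the auxiliary instance with red star $T_i$ and costs $c_i$. *)

From Stdlib Require Import ClassicalEpsilon.
From HB Require Import structures.
From mathcomp Require Import all_boot all_order all_algebra.
Set Implicit Arguments. Unset Strict Implicit. Unset Printing Implicit Defensive.
Import Order.TTheory GRing.Theory Num.Theory.
Local Open Scope ring_scope.

Definition mg_adj (V E : finType) (ends : E -> {set V}) (S : {set E}) : rel V :=
  fun a b => [exists e in S, (a != b) && (ends e == [set a; b])].

(* (es, xs) is a simple cycle using edges of A: distinct edges e_1..e_k,
   distinct vertices x_0..x_{k-1}, k >= 2, and e_j joins x_{j-1}, x_j
   (indices mod k).  k = 2 corresponds to two parallel edges. *)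
Definition simple_cycle (V E : finType) (ends : E -> {set V}) (A : {set E})
    (es : seq E) (xs : seq V) : Prop :=
  [/\ (2 <= size es)%N, size xs = size es, uniq es & uniq xs] /\
  [/\ all (fun e => e \in A) es &
      all2 (fun e p => ends e == [set p.1; p.2]) es (zip xs (rot 1 xs))].

Definition is_spanning_tree (V E : finType) (ends : E -> {set V})
    (W : {set V}) (A S : {set E}) : Prop :=
  [/\ S \subset A,
      {in W &, forall x y, connect (mg_adj ends S) x y} &
      forall es xs, ~ simple_cycle ends S es xs].

Definition mg_weight (R : realFieldType) (E : finType) (w : E -> R)
    (S : {set E}) : R := \sum_(e in S) w e.

Definition is_mst (R : realFieldType) (V E : finType) (ends : E -> {set V})
    (W : {set V}) (A : {set E}) (w : E -> R) (S : {set E}) : Prop :=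
  is_spanning_tree ends W A S /\
  forall S', is_spanning_tree ends W A S' -> mg_weight w S <= mg_weight w S'.

Definition bottleneck (R : realFieldType) (E : finType) (red : {set E})
    (cost : E -> R) (es : seq E) : R :=
  \big[Num.max/0]_(e <- es | e \in red) cost e.

Definition is_pF (R : realFieldType) (V E : finType) (ends : E -> {set V})
    (A red : {set E}) (cost : E -> R) (e : E) (p : R) : Prop :=
  (exists es xs, [/\ simple_cycle ends A es xs, e \in es &
                     bottleneck red cost es = p]) /\
  (forall es xs, simple_cycle ends A es xs -> e \in es ->
                 p <= bottleneck red cost es).

Definition pF (R : realFieldType) (V E : finType) (ends : E -> {set V})
    (A red : {set E}) (cost : E -> R) (e : E) : R :=
  epsilon (inhabits 0) (is_pF ends A red cost e).

Definition follower_w (R : realFieldType) (V E : finType) (ends : E -> {set V})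
    (A red : {set E}) (cost : E -> R) (e : E) : R :=
  if e \in red then cost e else pF ends A red cost e.

Definition leader_rev (R : realFieldType) (V E : finType) (ends : E -> {set V})
    (A red : {set E}) (cost : E -> R) (S : {set E}) : R :=
  \sum_(e in S | e \in A :\: red) pF ends A red cost e.

(* the follower takes a minimum spanning tree, ties broken in favour of
   the leader: r is the largest leader revenue over all MSTs *)
Definition is_r (R : realFieldType) (V E : finType) (ends : E -> {set V})
    (W : {set V}) (A red : {set E}) (cost : E -> R) (r : R) : Prop :=
  (exists S, is_mst ends W A (follower_w ends A red cost) S /\
             leader_rev ends A red cost S = r) /\
  (forall S, is_mst ends W A (follower_w ends A red cost) S ->
             leader_rev ends A red cost S <= r).

Definition revenue (R : realFieldType) (V E : finType) (ends : E -> {set V})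
    (W : {set V}) (A red : {set E}) (cost : E -> R) : R :=
  epsilon (inhabits 0) (is_r ends W A red cost).

Definition is_tree (V : finType) (ET : {set {set V}}) : Prop :=
  (forall e, e \in ET -> #|e| = 2%N) /\
  is_spanning_tree (fun e : {set V} => e) [set: V] ET ET.

Definition ball (V : finType) (ET : {set {set V}}) (n : nat) (u : V) : {set V} :=
  iter n (fun S => S :|: [set y | [exists x in S, [set x; y] \in ET]]) [set u].

Definition dist (V : finType) (ET : {set {set V}}) (u v : V) : nat :=
  find (fun n => v \in ball ET n u) (iota 0 #|V|).

Definition ecc (V : finType) (ET : {set {set V}}) (u : V) : nat :=
  \max_(v : V) dist ET u v.

Definition is_center (V : finType) (ET : {set {set V}}) (v0 : V) : Prop :=
  forall u, (ecc ET v0 <= ecc ET u)%N.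

Definition height (V : finType) (ET : {set {set V}}) (v0 : V) : nat := ecc ET v0.

Definition depth (V : finType) (ET : {set {set V}}) (v0 v : V) : nat :=
  dist ET v0 v.

Definition Vlev (V : finType) (ET : {set {set V}}) (v0 : V) (i : nat) : {set V} :=
  [set v | depth ET v0 v == i].

Definition parent (V : finType) (ET : {set {set V}}) (v0 v : V) : V :=
  odflt v [pick u | ([set u; v] \in ET) && ((depth ET v0 u).+1 == depth ET v0 v)].

Definition ci (R : realFieldType) (V : finType) (ET : {set {set V}})
    (c : {set V} -> R) (v0 v : V) : R :=
  if v == v0 then 0 else c [set parent ET v0 v; v].

Definition Elev (V : finType) (ET : {set {set V}}) (v0 : V) (i : nat)
  : {set {set V}} := [set [set parent ET v0 v; v] | v in Vlev ET v0 i].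

Definition compi (V : finType) (ET : {set {set V}}) (v0 : V) (i : nat) (x a : V)
  : bool :=
  connect (fun p q => ([set p; q] \in ET) && ([set p; q] \notin Elev ET v0 i)) x a.

Definition Wlev (V : finType) (ET : {set {set V}}) (v0 : V) (i : nat) : {set V} :=
  v0 |: Vlev ET v0 i.

Definition Blev (V : finType) (ET : {set {set V}}) (v0 : V) (i : nat)
  : {set {set V}} :=
  [set p | [exists x in Wlev ET v0 i, exists y in Wlev ET v0 i,
     [&& x != y, p == [set x; y] &
         [exists a, exists b,
            [&& compi ET v0 i x a, compi ET v0 i y b, a != b &
                [set a; b] \notin ET]]]]].

(* Edges: inl v = red edge (v0, v), v in V_i; inr p = added edge p.   *)

Definition aux_ends (V : finType) (v0 : V) (e : (V + {set V})%type) : {set V} :=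
  match e with inl v => [set v0; v] | inr p => p end.

Definition aux_cost (R : realFieldType) (V : finType) (ET : {set {set V}})
    (c : {set V} -> R) (v0 : V) (e : (V + {set V})%type) : R :=
  match e with inl v => ci ET c v0 v | inr _ => 0 end.

Definition aux_red (V : finType) (ET : {set {set V}}) (v0 : V) (i : nat)
  : {set (V + {set V})%type} := [set inl v | v in Vlev ET v0 i].

Definition aux_edges (V : finType) (ET : {set {set V}}) (v0 : V) (i : nat)
    (F : {set {set V}}) : {set (V + {set V})%type} :=
  aux_red ET v0 i :|: [set inr p | p in F].

Definition r_aux (R : realFieldType) (V : finType) (ET : {set {set V}})
    (c : {set V} -> R) (v0 : V) (i : nat) (F : {set {set V}}) : R :=
  revenue (aux_ends v0) (Wlev ET v0 i) (aux_edges ET v0 i F) (aux_red ET v0 i)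
          (aux_cost ET c v0).

Definition fadj (V : finType) (F : {set {set V}}) : rel V :=
  fun x y => [set x; y] \in F.

Definition forest_of_stars (V : finType) (W : {set V}) (F : {set {set V}}) : Prop :=
  (forall p, p \in F -> p \subset W /\ #|p| = 2%N) /\
  forall x, x \in W -> exists2 z, connect (fadj F) x z &
    (forall y, connect (fadj F) x y -> y != z -> fadj F z y) /\
    (forall a b, fadj F a b -> connect (fadj F) x a -> (a == z) || (b == z)).

Definition fdeg (V : finType) (F : {set {set V}}) (v : V) : nat :=
  #|[set u | fadj F v u]|.

(* L is the set of leaves of the stars of (W, F): leaves have degree 1;
   the non-center endpoints of stars with >= 2 edges are leaves; for a
   star with a single edge exactly one (arbitrary) endpoint is a leaf *)
Definition star_leaves (V : finType) (F : {set {set V}}) (L : {set V}) : Prop :=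
  [/\ forall v, v \in L -> fdeg F v = 1%N,
      forall u v, fadj F u v -> (2 <= fdeg F u)%N -> v \in L &
      forall u v, fadj F u v -> fdeg F u = 1%N -> fdeg F v = 1%N ->
                  (u \in L) != (v \in L)].

(* For a leaf l of a star of F with neighbour u, every cycle of T_i + F through
   the added edge lu must leave l through its only other edge, the red edge v0 l;
   hence p_F(lu) >= c_i(v0, l).  If c_i(v0, l) > 0 and lu is missing from a
   minimum spanning tree S, then lu closes a cycle with S whose most expensive
   red edge f costs at least c_i(v0, l) > 0, hence at least p_F(lu), and trading
   f for lu gives another minimum spanning tree.  So some minimum spanning tree
   contains all these leaf edges, which are distinct for distinct leaves, and its
   revenue, a lower bound for r(F), is at least the sum of their prices. *)

From Stdlib Require Import Classical ClassicalEpsilon.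
From HB Require Import structures.
From mathcomp Require Import all_boot all_order all_algebra.
Set Implicit Arguments. Unset Strict Implicit. Unset Printing Implicit Defensive.
Import Order.TTheory GRing.Theory Num.Theory.
Local Open Scope ring_scope.

Lemma ex_minimizer_nat (O : Type) (P : O -> Prop) (f : O -> nat) :
  (exists o, P o) -> exists o, P o /\ forall o', P o' -> (f o <= f o')%N.
Proof.
move=> [o Po]; elim: {o}(f o) {-2}o (leqnn (f o)) Po => [|n IHn] o le_fo Po.
  by exists o; split=> // o' _; move: le_fo; rewrite leqn0 => /eqP ->.
have [[o' [Po' lt_o'o]]|no_smaller] := classic (exists o', P o' /\ (f o' < f o)%N).
  exact: IHn (leq_trans lt_o'o le_fo) Po'.
exists o; split=> // o' Po'; rewrite leqNgt; apply/negP => lt_o'o.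
by apply: no_smaller; exists o'.
Qed.

Lemma ex_minimizer (R : realDomainType) (O : finType) (P : O -> Prop) (f : O -> R) :
  (exists o, P o) -> exists o, P o /\ forall o', P o' -> f o <= f o'.
Proof.
(* Minimize the number of points with a strictly smaller value. *)
move=> exP; have [o [Po minP]] := ex_minimizer_nat (fun o => #|[set x | f x < f o]|) exP.
exists o; split=> // o' Po'; rewrite leNgt; apply/negP => lt_o'o.
have := minP o' Po'; rewrite leqNgt => /negP; apply; apply: proper_card.
apply/properP; split; first by apply/subsetP => x; rewrite !inE => /lt_trans; apply.
by exists o'; rewrite !inE ?lt_o'o // ltxx.
Qed.

Lemma ex_maximizer (R : realDomainType) (O : finType) (P : O -> Prop) (f : O -> R) :
  (exists o, P o) -> exists o, P o /\ forall o', P o' -> f o' <= f o.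
Proof.
move=> /(ex_minimizer (fun o => - f o)) [o [Po maxP]].
by exists o; split=> // o' /maxP; rewrite lerN2.
Qed.

Lemma ex_superset (E : finType) (P : {set E} -> Prop) (Q : {set E}) :
  (exists S, P S) ->
  (forall S e, P S -> e \in Q -> e \notin S ->
     exists2 f, f \in S :\: Q & P (e |: (S :\ f))) ->
  exists S, P S /\ Q \subset S.
Proof.
move=> exP swap; have [S [PS minS]] := ex_minimizer_nat (fun S => #|Q :\: S|) exP.
exists S; split=> //; apply/subsetP => e eQ; apply: contraT => eNS.
have [f /setDP[fS fNQ] PS'] := swap S e PS eQ eNS.
suff: (#|Q :\: (e |: S :\ f)| < #|Q :\: S|)%N by rewrite ltnNge minS.
apply: proper_card.
apply/properP; split.
  apply/subsetP => z; rewrite !inE negb_or => /andP[/andP[_ zNS'] zQ].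
  by rewrite zQ andbT; apply: contra zNS' => zS; rewrite zS andbT; apply: contraTneq zQ => ->.
by exists e; rewrite !inE ?eqxx ?eQ ?eNS.
Qed.

Section Walks.
Variable T : eqType.
Implicit Types (x y : T) (s : seq T).

Lemma zip_cons_rcons x s y : zip (x :: rcons s y) (rcons s y) = zip (x :: s) (rcons s y).
Proof. by elim: s x => //= z s IHs x; rewrite IHs. Qed.

Lemma zip_belast x s : zip (belast x s) s = zip (x :: s) s.
Proof. by elim: s x => //= z s IHs x; rewrite IHs. Qed.

Lemma path_zip_cons (r : rel T) x s :
  path r x s -> all (fun p => r p.1 p.2) (zip (x :: s) s).
Proof. by elim: s x => //= y s IHs x /andP[-> /IHs]. Qed.

Lemma mem_zip_cons x s p : p \in zip (x :: s) s -> (p.1 \in x :: s) && (p.2 \in x :: s).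
Proof.
elim: s x => //= y s IHs x; rewrite inE => /orP[/eqP -> | /IHs].
  by rewrite /= !inE !eqxx orbT.
by rewrite !inE => /andP[-> ->]; rewrite !orbT.
Qed.

End Walks.

Lemma zip_drop (A B : Type) n (s : seq A) (t : seq B) :
  zip (drop n s) (drop n t) = drop n (zip s t).
Proof. by elim: n s t => [|n IHn] [|a s] [|b t] //=; case: (drop _ _). Qed.

Lemma zip_take (A B : Type) n (s : seq A) (t : seq B) :
  zip (take n s) (take n t) = take n (zip s t).
Proof. by elim: n s t => [|n IHn] [|a s] [|b t] //=; rewrite IHn. Qed.

Lemma zip_rot (A B : Type) n (s : seq A) (t : seq B) :
  size s = size t -> zip (rot n s) (rot n t) = rot n (zip s t).
Proof. by move=> eq_st; rewrite /rot zip_cat ?size_drop ?eq_st // zip_drop zip_take. Qed.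

Lemma all_rot (T : eqType) (a : pred T) n (s : seq T) : all a (rot n s) = all a s.
Proof. by apply: perm_all; rewrite perm_rot. Qed.

Lemma all2_rcons (A B : Type) (r : A -> B -> bool) s t x y :
  all2 r (rcons s x) (rcons t y) -> r x y.
Proof.
elim: s t => [|a s IHs] [|b t] /=; rewrite ?andbT //.
- by case: t; rewrite /= ?andbF.
- by case: s {IHs} => [|? ?]; rewrite /= andbF.
- by move=> /andP[_]; apply: IHs.
Qed.

Lemma all2_map_l (A B : Type) (r : A -> B -> bool) (h : B -> A) s :
  all2 r (map h s) s = all (fun b => r (h b) b) s.
Proof. by elim: s => //= b s ->. Qed.

Section Multigraph.
Variables (V E : finType) (ends : E -> {set V}).
Implicit Types (A S X Y : {set E}) (e f g : E) (es : seq E) (xs : seq V).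

Local Notation adj := (mg_adj ends).
Local Notation walk_edges es x s :=
  (all2 (fun e p => ends e == [set p.1; p.2]) es (zip (x :: s) s)).

Lemma uniq_zip_cons_pairs (x : V) s :
  uniq (x :: s) -> uniq [seq [set p.1; p.2] | p <- zip (x :: s) s].
Proof.
elim: s x => //= y s IHs x /andP[xNs uniq_s]; rewrite IHs // andbT.
apply/mapP => -[p /mem_zip_cons /andP[p1s p2s] eq_xy_p].
have : x \in [set p.1; p.2] by rewrite -eq_xy_p !inE eqxx.
by rewrite !inE => /orP[]/eqP x_eq; move: xNs; rewrite x_eq ?p1s ?p2s.
Qed.

Lemma mg_adj_sym S : symmetric (adj S).
Proof.
move=> a b; apply/existsP/existsP => -[e /and3P[eS ab /eqP ends_e]];
  by exists e; rewrite eS eq_sym ab ends_e /= setUC.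
Qed.

Lemma connect_mg_adj_sym S : connect_sym (adj S).
Proof. exact/sym_connect_sym/mg_adj_sym. Qed.

Lemma sub_mg_adj S S' : S \subset S' -> subrel (adj S) (adj S').
Proof.
move=> sub_SS' a b /existsP[e /andP[eS ends_e]].
by apply/existsP; exists e; rewrite (subsetP sub_SS' _ eS).
Qed.

Lemma sub_connect_mg_adj S S' :
  S \subset S' -> subrel (connect (adj S)) (connect (adj S')).
Proof. by move=> sub_SS'; apply: connect_sub => a b /(sub_mg_adj sub_SS')/connect1. Qed.

Lemma connect_setD1 X g a b : ends g = [set a; b] ->
  connect (adj (X :\ g)) a b -> subrel (connect (adj X)) (connect (adj (X :\ g))).
Proof.
move=> ends_g conn_ab; apply: connect_sub => u v /existsP[h /and3P[hX uv /eqP ends_h]].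
have [eq_hg | neq_hg] := eqVneq h g; last first.
  by apply: connect1; apply/existsP; exists h; rewrite !inE neq_hg hX uv ends_h eqxx.
have conn_sym := connect_mg_adj_sym (X :\ g).
have : u \in [set a; b] /\ v \in [set a; b].
  by rewrite -ends_g -eq_hg ends_h !inE !eqxx orbT.
by rewrite !inE => -[/orP[]/eqP-> /orP[]/eqP->]; rewrite ?connect0 // conn_sym.
Qed.

Lemma connect_walk Y es x s : walk_edges es x s -> all (mem Y) es -> uniq (x :: s) ->
  connect (adj Y) x (last x s).
Proof.
elim: s x es => [|y s IHs] x es; first by rewrite connect0.
case: es => [|e es] //=.
move=> /andP[/eqP ends_e walk_es] /andP[eY Y_es] /andP[xNys uniq_ys].
apply: connect_trans (IHs _ _ walk_es Y_es uniq_ys); apply: connect1.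
apply/existsP; exists e; rewrite eY ends_e eqxx andbT.
by apply: contraNneq xNys => ->; rewrite inE eqxx.
Qed.

Lemma simple_cycle_rot A es xs n :
  simple_cycle ends A es xs -> simple_cycle ends A (rot n es) (rot n xs).
Proof.
case=> -[size_es size_xs uniq_es uniq_xs] [A_es ends_es].
split; first by split; rewrite ?size_rot ?rot_uniq.
split; first by rewrite all_rot.
move: ends_es; rewrite !all2E !size_zip !size_rot => /andP[-> ends_es] /=.
rewrite rot_rot zip_rot ?size_rot // zip_rot; last by rewrite size_zip size_rot size_xs minnn.
by rewrite all_rot.
Qed.

Lemma simple_cycle_at A es xs e : simple_cycle ends A es xs -> e \in es ->
  exists es' x0 x1 s', [/\ ends e = [set x0; x1], uniq (x0 :: x1 :: s'),
    all2 (fun g p => ends g == [set p.1; p.2]) es' (zip (x1 :: s') (rcons s' x0)),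
    e \notin es' & {subset es' <= es}].
Proof.
move=> cyc e_es; have := simple_cycle_rot (index e es) cyc.
have lt_e : (index e es < size es)%N by rewrite index_mem.
set es' := drop (index e es).+1 es ++ take (index e es) es.
have rot_es : rot (index e es) es = e :: es'.
  by rewrite /rot (drop_nth e lt_e) nth_index.
rewrite rot_es => -[[size_es size_xs uniq_es uniq_xs] [_ ends_es]].
move: size_xs uniq_xs ends_es; case: (rot _ xs) => [|x0 [|x1 s']] size_xs;
  try by rewrite -size_xs in size_es.
move=> uniq_xs; rewrite rot1_cons rcons_cons /= => /andP[/eqP ends_e ends_es'].
move: uniq_es => /= /andP[eNes' _].
exists es', x0, x1, s'; split=> // g g_es'.
by rewrite -(mem_rot (index e es)) rot_es inE g_es' orbT.
Qed.

Lemma simple_cycle_connect X es xs g : simple_cycle ends X es xs -> g \in es ->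
  exists a b, [/\ ends g = [set a; b], a != b & connect (adj (X :\ g)) a b].
Proof.
move=> cyc g_es; have [es' [x0 [x1 [s' [ends_g uniq_xs walk_es' gNes' sub_es']]]]] :=
  simple_cycle_at cyc g_es.
exists x1, x0; split; first by rewrite ends_g setUC.
  by move: uniq_xs => /= /andP[]; rewrite inE negb_or eq_sym => /andP[].
have uniq_walk : uniq (x1 :: rcons s' x0) by rewrite -rcons_cons -rot1_cons rot_uniq.
have := connect_walk (Y := X :\ g) (es := es') _ _ uniq_walk; rewrite last_rcons; apply.
  by rewrite zip_cons_rcons.
apply/allP => h h_es'; rewrite !inE; apply/andP; split.
  by apply: contraNneq gNes' => <-.
by case: cyc => _ [/allP X_es _]; apply/X_es/sub_es'.
Qed.

Lemma simple_cycle_other_edge X es xs e l :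
  simple_cycle ends X es xs -> e \in es -> l \in ends e ->
  exists2 g, g \in es & (g != e) && (l \in ends g).
Proof.
move=> cyc e_es; have [es' [x0 [x1 [s' [ends_e _ walk_es' eNes' sub_es']]]]] :=
  simple_cycle_at cyc e_es.
have neq_e g : g \in es' -> g != e by apply: contraTneq => ->.
rewrite ends_e !inE => /orP[]/eqP->.
- case/lastP: es' walk_es' eNes' sub_es' neq_e => [|es'' g]; first by case: (s').
  rewrite (lastI x1 s') zip_rcons ?size_belast // => walk _ sub_es' neq_e.
  exists g; first by apply: sub_es'; rewrite mem_rcons mem_head.
  by rewrite (eqP (all2_rcons walk)) neq_e ?mem_rcons ?mem_head // !inE eqxx orbT.
- case: es' walk_es' eNes' sub_es' neq_e => [|g es'']; first by case: (s').
  case: s' => [|y s'] /= /andP[/eqP ends_g _] _ sub_es' neq_e;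
    (exists g; first exact/sub_es'/mem_head);
    by rewrite ends_g neq_e ?mem_head // !inE eqxx.
Qed.

End Multigraph.

Section SpanningTrees.
Variables (V E : finType) (ends : E -> {set V}).
Implicit Types (A S X : {set E}) (e f g : E) (es : seq E) (xs : seq V) (W : {set V}).

Local Notation adj := (mg_adj ends).

Lemma simple_cycle_sub X X' es xs :
  simple_cycle ends X es xs -> {subset es <= X'} -> simple_cycle ends X' es xs.
Proof. by case=> cyc [_ ends_es] sub_es; split=> //; split=> //; apply/allP. Qed.

Lemma simple_cycle_of_connect X g p q : g \in X -> ends g = [set p; q] -> p != q ->
  connect (adj (X :\ g)) q p -> exists es xs, simple_cycle ends X es xs /\ g \in es.
Proof.
move=> gX ends_g neq_pq /connectP[pth0 path_pth0 eq_p]; subst p.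
case/shortenP: path_pth0 ends_g neq_pq => pth path_pth uniq_pth _ ends_g neq_pq.
pose steps := zip (q :: pth) pth.
pose edge_of (p : V * V) := odflt g [pick e in X :\ g | ends e == [set p.1; p.2]].
have edge_ofP p : p \in steps ->
    (edge_of p \in X :\ g) && (ends (edge_of p) == [set p.1; p.2]).
  move=> /(allP (path_zip_cons path_pth)) /existsP[e /and3P[eXg _ ends_e]].
  by rewrite /edge_of; case: pickP => [e' /andP[-> ->] | /(_ e)] //; rewrite eXg ends_e.
have pth_nil : pth != [::] by apply: contraNneq neq_pq => ->.
exists (g :: map edge_of steps), (last q pth :: belast q pth); split; last exact: mem_head.
split; split.
- by rewrite /= size_map size2_zip //= ltnS lt0n size_eq0.
- by rewrite /= size_map size_belast size2_zip /=.
- rewrite /= (map_uniq (f := ends)); last first.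
    rewrite -map_comp.
    have -> : map (ends \o edge_of) steps = [seq [set p.1; p.2] | p <- steps].
      by apply/eq_in_map => p /edge_ofP /andP[_ /eqP].
    exact: uniq_zip_cons_pairs.
  rewrite andbT; apply/mapP => -[p /edge_ofP /andP[gXg _] eq_g].
  by move: gXg; rewrite -eq_g !inE eqxx.
- by rewrite -(rot_uniq 1) rot1_cons -lastI.
- rewrite /= gX /=; apply/allP => e /mapP[p /edge_ofP /andP[eXg _] ->].
  by move: eXg; rewrite !inE => /andP[].
- rewrite rot1_cons -lastI /= ends_g eqxx /= zip_belast all2_map_l.
  by apply/allP => p /edge_ofP /andP[].
Qed.

Lemma ex_spanning_tree W A :
  {in W &, forall x y, connect (adj A) x y} -> exists S, is_spanning_tree ends W A S.
Proof.
(* A minimum-size connected spanning subgraph has no cycle: removing any cycle edge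
   would keep it connected. *)
move=> conn_A.
have [X [[XA conn_X] minX]] := ex_minimizer_nat (fun X : {set E} => #|X|)
  (ex_intro (fun X => X \subset A /\ {in W &, forall x y, connect (adj X) x y})
     A (conj (subxx A) conn_A)).
exists X; split=> // es xs cyc.
have [g g_es] : exists g, g \in es.
  by case: cyc => -[+ _ _ _] _; case: es => // g es _; exists g; apply: mem_head.
have gX : g \in X by case: cyc => _ [/allP X_es _]; apply: X_es.
have [a [b [ends_g _ conn_ab]]] := simple_cycle_connect cyc g_es.
suff : (#|X| <= #|X :\ g|)%N by rewrite (cardsD1 g X) gX add1n ltnn.
apply: minX; split; first exact: subset_trans (subsetDl X _) XA.
by move=> x y Wx Wy; apply: connect_setD1 ends_g conn_ab _ _ (conn_X x y Wx Wy).
Qed.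

Lemma spanning_tree_exchange W A S e f es xs :
  is_spanning_tree ends W A S -> e \in A -> e \notin S ->
  simple_cycle ends (e |: S) es xs -> e \in es -> f \in es -> f != e ->
  is_spanning_tree ends W A (e |: (S :\ f)).
Proof.
move=> [SA conn_S acyc_S] eA eNS cyc e_es f_es neq_fe.
have fS : f \in S by case: cyc => _ [/allP /(_ f f_es)]; rewrite !inE (negPf neq_fe).
have swapE : (e |: S) :\ f = e |: (S :\ f).
  by apply/setP => x; rewrite !inE; case: (x =P e) => [->|] //=; rewrite eq_sym neq_fe.
have [a [b [ends_f neq_ab conn_ab]]] := simple_cycle_connect cyc f_es.
split.
- by apply/subsetP => x; rewrite !inE => /orP[/eqP-> | /andP[_ /(subsetP SA)]].
- move=> x y Wx Wy; rewrite -swapE; apply: connect_setD1 ends_f conn_ab _ _ _.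
  exact: sub_connect_mg_adj (subsetUr [set e] S) _ _ (conn_S x y Wx Wy).
- move=> ds ys cyc'.
  have [e_ds | eNds] := boolP (e \in ds); last first.
    apply: (acyc_S ds ys); apply: (simple_cycle_sub cyc') => z z_ds.
    case: cyc' => _ [/allP /(_ z z_ds)]; rewrite !inE => /orP[/eqP ze | /andP[]//].
    by rewrite -ze z_ds in eNds.
  (* Both [e] and [f] can be removed keeping their ends connected, so [f] lies on
     a cycle of [S]. *)
  have [x [y [ends_e _ conn_xy]]] := simple_cycle_connect cyc' e_ds.
  have sub_Sf : (e |: (S :\ f)) :\ e \subset S :\ f.
    by apply/subsetP => z; rewrite !inE => /andP[/negPf->].
  have conn_ba : connect (adj (S :\ f)) b a.
    rewrite connect_mg_adj_sym; apply: (sub_connect_mg_adj sub_Sf).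
    by apply: connect_setD1 ends_e conn_xy _ _ _; rewrite -swapE.
  have [es' [xs' [cyc_S _]]] := simple_cycle_of_connect fS ends_f neq_ab conn_ba.
  exact: acyc_S cyc_S.
Qed.

End SpanningTrees.

Section Bottleneck.
Variables (R : realFieldType) (E : finType) (red : {set E}) (cost : E -> R).
Implicit Types (es : seq E) (g : E).

Lemma bottleneck_ge0 es : 0 <= bottleneck red cost es.
Proof. by rewrite /bottleneck; elim/big_rec: _ => // g x _ x_ge0; rewrite le_max x_ge0 orbT. Qed.

Lemma bottleneck_ge es g : g \in es -> g \in red -> cost g <= bottleneck red cost es.
Proof.
rewrite /bottleneck; elim: es => // h es IHes; rewrite inE big_cons.
case/orP => [/eqP<- -> | /IHes le_g /le_g le_g']; first by rewrite le_max lexx.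
by case: ifP => // _; rewrite le_max le_g' orbT.
Qed.

Lemma bottleneck_le es M : 0 <= M ->
  (forall g, g \in es -> g \in red -> cost g <= M) -> bottleneck red cost es <= M.
Proof.
move=> M_ge0 le_M; rewrite /bottleneck big_seq_cond.
apply: (big_ind (fun x => x <= M)) => // [x y xM yM | g /andP[]]; first by rewrite ge_max xM.
exact: le_M.
Qed.

Lemma bottleneck_value es : exists o, bottleneck red cost es = oapp cost 0 o.
Proof.
rewrite /bottleneck; elim/big_rec: _ => [|g x _ [o ->]]; first by exists None.
by rewrite /Num.max; case: ifP; [exists o | exists (Some g)].
Qed.

End Bottleneck.

Section Revenue.
Variables (R : realFieldType) (V E : finType) (ends : E -> {set V}).
Variables (W : {set V}) (A red : {set E}) (cost : E -> R).
Implicit Types (S : {set E}) (e f : E) (es : seq E) (xs : seq V) (w : E -> R).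

Lemma pF_spec e : (exists es xs, simple_cycle ends A es xs /\ e \in es) ->
  is_pF ends A red cost e (pF ends A red cost e).
Proof.
(* The bottleneck only takes the finitely many values [0] and [cost g]. *)
move=> [es [xs [cyc e_es]]]; apply: epsilon_spec.
have ex_value : exists o, exists es xs, [/\ simple_cycle ends A es xs, e \in es &
    bottleneck red cost es = oapp cost 0 o].
  by have [o val_o] := bottleneck_value red cost es; exists o, es, xs.
have [o [[es' [xs' [cyc' e_es' val_es']]] min_o]] := ex_minimizer (oapp cost 0) ex_value.
exists (oapp cost 0 o); split; first by exists es', xs'.
move=> ds ys cyc_d e_ds; have [o' val_ds] := bottleneck_value red cost ds.
by rewrite val_ds; apply: min_o; exists ds, ys.
Qed.

Lemma ex_mst w : {in W &, forall x y, connect (mg_adj ends A) x y} ->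
  exists S, is_mst ends W A w S.
Proof.
move=> /ex_spanning_tree ex_tree.
have [S [tree_S min_S]] := ex_minimizer (mg_weight w) ex_tree.
by exists S; split.
Qed.

Lemma mst_exchange w S e f es xs :
  is_mst ends W A w S -> e \in A -> e \notin S ->
  simple_cycle ends (e |: S) es xs -> e \in es -> f \in es -> f != e -> w e <= w f ->
  is_mst ends W A w (e |: (S :\ f)).
Proof.
move=> [tree_S min_S] eA eNS cyc e_es f_es neq_fe le_ef.
have fS : f \in S by case: cyc => _ [/allP /(_ f f_es)]; rewrite !inE (negPf neq_fe).
split; first exact: spanning_tree_exchange cyc e_es f_es neq_fe.
move=> S' tree_S'; apply: le_trans (min_S S' tree_S').
rewrite /mg_weight (big_setD1 f fS) big_setU1 /=; last by rewrite !inE negb_and eNS orbT.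
by rewrite lerD2r.
Qed.

Lemma leader_rev_le_revenue S : is_mst ends W A (follower_w ends A red cost) S ->
  leader_rev ends A red cost S <= revenue ends W A red cost.
Proof.
move=> mst_S.
have [S' [mst_S' max_S']] :=
  ex_maximizer (leader_rev ends A red cost) (ex_intro _ S mst_S).
have ex_r : exists r, is_r ends W A red cost r.
  by exists (leader_rev ends A red cost S'); split; first by exists S'.
exact: (epsilon_spec _ _ ex_r).2 S mst_S.
Qed.

End Revenue.

Lemma depth_root (V : finType) (ET : {set {set V}}) (v0 : V) : depth ET v0 v0 = 0%N.
Proof.
rewrite /depth /dist; have : (0 < #|V|)%N by apply/card_gt0P; exists v0.
by case: #|V| => // n _ /=; rewrite /ball /= inE eqxx.
Qed.

Section AuxiliaryInstance.
Variables (R : realFieldType) (V : finType) (ET : {set {set V}}) (c : {set V} -> R).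
Variables (v0 : V) (i : nat) (F : {set {set V}}) (L : {set V}).
Hypotheses (i_gt0 : (0 < i)%N) (stars : forest_of_stars (Wlev ET v0 i) F)
  (leaves : star_leaves F L).

Local Notation E := (V + {set V})%type.
Local Notation ends := (aux_ends v0).
Local Notation W := (Wlev ET v0 i).
Local Notation A := (aux_edges ET v0 i F).
Local Notation red := (aux_red ET v0 i).
Local Notation cost := (aux_cost ET c v0).
Local Notation pFA := (pF ends A red cost).
Local Notation w := (follower_w ends A red cost).

Lemma root_notin_Vlev : v0 \notin Vlev ET v0 i.
Proof. by rewrite inE depth_root eq_sym -lt0n. Qed.

Lemma Vlev_of_Wlev v : v \in W -> v != v0 -> v \in Vlev ET v0 i.
Proof. by rewrite in_setU1 => /orP[->|]. Qed.

Lemma connect_red_root v : v \in W -> connect (mg_adj ends red) v v0.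
Proof.
rewrite in_setU1 => /orP[/eqP-> | vV]; first exact: connect0.
have neq_v : v != v0 by apply: contraTneq vV => ->; apply: root_notin_Vlev.
apply: connect1; apply/existsP; exists (inl v).
by rewrite imset_f //= neq_v setUC eqxx.
Qed.

Lemma connect_red : {in W &, forall x y, connect (mg_adj ends red) x y}.
Proof.
move=> x y Wx Wy; apply: connect_trans (connect_red_root Wx) _.
by rewrite connect_mg_adj_sym connect_red_root.
Qed.

Lemma connect_aux_edges : {in W &, forall x y, connect (mg_adj ends A) x y}.
Proof. by move=> x y Wx Wy; apply: sub_connect_mg_adj (subsetUl _ _) _ _ (connect_red Wx Wy). Qed.

Lemma F_edge p : p \in F -> exists x y, [/\ x != y, p = [set x; y], x \in W & y \in W].
Proof.
move=> pF; have [sub_pW /eqP/cards2P [x [y [neq_xy eq_p]]]] := stars.1 p pF.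
by exists x, y; split=> //; apply: (subsetP sub_pW); rewrite eq_p !inE eqxx ?orbT.
Qed.

Lemma inr_aux_edges p : p \in F -> (inr p : E) \in A.
Proof. by move=> pF; rewrite inE imset_f ?orbT. Qed.

Lemma inr_notin_red p : (inr p : E) \notin red.
Proof. by apply/imsetP => -[]. Qed.

Lemma cycle_through_F p : p \in F ->
  exists es xs, simple_cycle ends A es xs /\ (inr p : E) \in es.
Proof.
move=> pF; have [x [y [neq_xy eq_p Wx Wy]]] := F_edge pF.
apply: (simple_cycle_of_connect (inr_aux_edges pF) (_ : ends (inr p) = [set x; y]) neq_xy).
  by rewrite eq_p.
apply: (sub_connect_mg_adj (S := red)); last exact: connect_red.
by apply/subsetP => g g_red; rewrite in_setD1 (subsetP (subsetUl _ _) _ g_red) andbT;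
  apply: contraTneq g_red => ->; apply: inr_notin_red.
Qed.

Lemma pF_inr_ge0 p : p \in F -> 0 <= pFA (inr p).
Proof.
by move=> /cycle_through_F /(pF_spec red cost) [[es [xs [_ _ <-]]] _]; apply: bottleneck_ge0.
Qed.

Definition leaf_neighbor (l : V) : V := odflt l [pick u | fadj F l u].

Definition leaf_edge (l : V) : E := inr [set l; leaf_neighbor l].

Lemma leaf_neighborP l : l \in L ->
  fadj F l (leaf_neighbor l) /\ forall u, fadj F l u -> u = leaf_neighbor l.
Proof.
case: leaves => deg1 _ _ /deg1 /eqP/cards1P [x nbr_l].
have nbr_x u : fadj F l u -> u = x by move=> lu; apply/set1P; rewrite -nbr_l inE.
have : x \in [set u | fadj F l u] by rewrite nbr_l set11.
rewrite inE => lx.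
rewrite /leaf_neighbor; case: pickP => [u lu | /(_ x)]; last by rewrite lx.
by rewrite (nbr_x u lu); split=> // v /nbr_x.
Qed.

Lemma leaf_edge_F l : l \in L -> [set l; leaf_neighbor l] \in F.
Proof. by case/leaf_neighborP. Qed.

Lemma leaf_edge_A l : l \in L -> leaf_edge l \in A.
Proof. by move/leaf_edge_F/inr_aux_edges. Qed.

Lemma leaf_edge_W l : l \in L -> l \in W /\ leaf_neighbor l \in W.
Proof.
move/leaf_edge_F/stars.1 => [sub_W _].
by split; apply: (subsetP sub_W); rewrite !inE eqxx ?orbT.
Qed.

Lemma leaf_neighbor_neq l : l \in L -> l != leaf_neighbor l.
Proof.
move/leaf_edge_F/stars.1 => [_ card2]; apply/eqP => eq_l.
by move: card2; rewrite -eq_l setUid cards1.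
Qed.

(* Two leaves joined by an edge would form a one-edge star with both ends marked. *)
Lemma leaf_edge_inj : {in L &, injective leaf_edge}.
Proof.
move=> l l' lL l'L [eq_e]; apply/eqP; apply: contraT => neq_ll'.
have eq_l : l = leaf_neighbor l'.
  have : l \in [set l'; leaf_neighbor l'] by rewrite -eq_e !inE eqxx.
  by rewrite !inE (negPf neq_ll') => /eqP.
have eq_l' : l' = leaf_neighbor l.
  have : l' \in [set l; leaf_neighbor l] by rewrite eq_e !inE eqxx.
  by rewrite !inE eq_sym (negPf neq_ll') => /eqP.
have ll' : fadj F l l' by rewrite eq_l'; case: (leaf_neighborP lL).
case: leaves => deg1 _ /(_ _ _ ll' (deg1 _ lL) (deg1 _ l'L)).
by rewrite lL l'L.
Qed.

(* At the degree-one vertex [l] the cycle must leave through the red edge [v0 l]. *)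
Lemma leaf_cycle_red l es xs : l \in L -> l != v0 ->
  simple_cycle ends A es xs -> leaf_edge l \in es -> (inl l : E) \in es.
Proof.
move=> lL neq_l cyc e_es.
have l_e : l \in ends (leaf_edge l) by rewrite !inE eqxx.
have [g g_es /andP[neq_g l_g]] := simple_cycle_other_edge cyc e_es l_e.
have : g \in A by case: cyc => _ [/allP /(_ g g_es)].
rewrite !inE => /orP[/imsetP[v _ eq_g] | /imsetP[p pF eq_g]].
  by move: l_g; rewrite eq_g !inE (negPf neq_l) => /eqP eq_l; rewrite eq_l -eq_g.
move: neq_g l_g; rewrite eq_g /leaf_edge /= => neq_p l_p.
have [x [y [_ eq_p _ _]]] := F_edge pF.
have [_ uniq_nbr] := leaf_neighborP lL.
move: l_p; rewrite eq_p !inE => /orP[]/eqP eq_l.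
- have eq_y : y = leaf_neighbor l by apply: uniq_nbr; rewrite /fadj eq_l -eq_p.
  by move: neq_p; rewrite eq_p -eq_y eq_l eqxx.
- have eq_x : x = leaf_neighbor l by apply: uniq_nbr; rewrite /fadj eq_l setUC -eq_p.
  by move: neq_p; rewrite eq_p -eq_x eq_l setUC eqxx.
Qed.

Lemma ci_le_pF_leaf l : l \in L -> l != v0 -> ci ET c v0 l <= pFA (leaf_edge l).
Proof.
move=> lL neq_l.
have [[es [xs [cyc e_es <-]]] _] := pF_spec red cost (cycle_through_F (leaf_edge_F lL)).
apply: bottleneck_ge (leaf_cycle_red lL neq_l cyc e_es) _.
by apply: imset_f; apply: Vlev_of_Wlev (leaf_edge_W lL).1 neq_l.
Qed.

Lemma ci_gt0_neq_root l : 0 < ci ET c v0 l -> l != v0.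
Proof. by apply: contraTneq => ->; rewrite /ci eqxx ltxx. Qed.

Lemma leaf_cycle_max_red l es xs : l \in L -> 0 < ci ET c v0 l ->
  simple_cycle ends A es xs -> leaf_edge l \in es ->
  exists2 f, f \in es /\ f \in red & pFA (leaf_edge l) <= cost f.
Proof.
move=> lL ci_gt0 cyc e_es; have neq_l := ci_gt0_neq_root ci_gt0.
have l_red : (inl l : E) \in red.
  by apply: imset_f; apply: Vlev_of_Wlev (leaf_edge_W lL).1 neq_l.
have l_es := leaf_cycle_red lL neq_l cyc e_es.
have [f [[f_es f_red] max_f]] :=
  ex_maximizer cost (ex_intro (fun g => g \in es /\ g \in red) _ (conj l_es l_red)).
exists f => //; apply: le_trans ((pF_spec red cost _).2 es xs cyc e_es) _.
  exact: cycle_through_F (leaf_edge_F lL).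
apply: bottleneck_le => [|g g_es g_red]; last exact: max_f.
exact: le_trans (ltW ci_gt0) (max_f _ (conj l_es l_red)).
Qed.

Lemma leaf_edge_exchange S l : is_mst ends W A w S -> l \in L -> 0 < ci ET c v0 l ->
  leaf_edge l \notin S ->
  exists2 f, f \in S :&: red & is_mst ends W A w (leaf_edge l |: (S :\ f)).
Proof.
move=> mst_S lL ci_gt0 eNS; have [[SA conn_S _] _] := mst_S.
have [lW nW] := leaf_edge_W lL.
have [es [xs [cyc e_es]]] :
    exists es xs, simple_cycle ends (leaf_edge l |: S) es xs /\ leaf_edge l \in es.
  apply: (simple_cycle_of_connect (setU11 _ _) _ (leaf_neighbor_neq lL)) => //.
  apply: sub_connect_mg_adj (conn_S _ _ nW lW).
  by apply/subsetP => g gS; rewrite !inE gS orbT andbT; apply: contraNneq eNS => <-.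
have cycA : simple_cycle ends A es xs.
  apply: (simple_cycle_sub cyc) => g g_es.
  have : g \in leaf_edge l |: S by case: cyc => _ [/allP /(_ g g_es)].
  by rewrite in_setU1 => /orP[/eqP-> | /(subsetP SA)//]; apply: leaf_edge_A.
have [f [f_es f_red] le_ef] := leaf_cycle_max_red lL ci_gt0 cycA e_es.
have neq_fe : f != leaf_edge l by apply: contraTneq f_red => ->; apply: inr_notin_red.
have fS : f \in S by case: cyc => _ [/allP /(_ f f_es)]; rewrite in_setU1 (negPf neq_fe).
exists f; first by rewrite inE fS.
apply: mst_exchange mst_S (leaf_edge_A lL) eNS cyc e_es f_es neq_fe _.
by rewrite /follower_w (negPf (inr_notin_red _)) f_red.
Qed.

Lemma ex_mst_leaf_edges : exists S, is_mst ends W A w S /\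
  leaf_edge @: [set l in L | 0 < ci ET c v0 l] \subset S.
Proof.
apply: ex_superset; first exact/ex_mst/connect_aux_edges.
move=> S _ mst_S /imsetP[l /setIdP[lL ci_gt0] ->] eNS.
have [f /setIP[fS f_red] mst_S'] := leaf_edge_exchange mst_S lL ci_gt0 eNS.
exists f => //; rewrite inE fS andbT.
by apply/imsetP => -[l' _ eq_f]; move: f_red; rewrite eq_f (negPf (inr_notin_red _)).
Qed.

Lemma sum_pF_le_leader_rev (S Q : {set E}) : Q \subset S -> Q \subset A :\: red ->
  \sum_(e in Q) pFA e <= leader_rev ends A red cost S.
Proof.
move=> QS Q_new; rewrite /leader_rev [X in _ <= X](bigID (mem Q)) /=.
have -> : \sum_(e | (e \in S) && (e \in A :\: red) && (e \in Q)) pFA e = \sum_(e in Q) pFA e.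
  apply: eq_bigl => e; case eQ: (e \in Q); rewrite ?andbF ?andbT //.
  by rewrite (subsetP QS _ eQ) (subsetP Q_new _ eQ).
rewrite lerDl; apply: sumr_ge0 => e /andP[/andP[_]].
rewrite in_setD => /andP[eNred]; rewrite inE (negPf eNred) => /imsetP[p pF ->] _.
exact: pF_inr_ge0.
Qed.

Theorem sum_ci_leaves_le_r_aux : \sum_(v in L) ci ET c v0 v <= r_aux ET c v0 i F.
Proof.
set D := [set l in L | 0 < ci ET c v0 l].
have [S [mst_S DS]] := ex_mst_leaf_edges.
apply: le_trans (leader_rev_le_revenue mst_S).
have D_L : {subset D <= L} by move=> l /setIdP[].
have D_new : leaf_edge @: D \subset A :\: red.
  apply/subsetP => _ /imsetP[l /D_L lL ->].
  by rewrite in_setD inr_notin_red leaf_edge_A.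
apply: le_trans (sum_pF_le_leader_rev DS D_new).
rewrite big_imset /=; last by move=> l l' /D_L lL /D_L l'L; apply: leaf_edge_inj.
rewrite (bigID (fun v => 0 < ci ET c v0 v)) /= -[X in _ <= X]addr0.
apply: lerD; last by apply: sumr_le0 => v /andP[_]; rewrite leNgt.
rewrite (eq_bigl (mem D)) => [|l]; last by rewrite !inE.
by apply: ler_sum => l /setIdP[lL /ci_gt0_neq_root]; apply: ci_le_pF_leaf.
Qed.

End AuxiliaryInstance.

Theorem lemma8 (R : realFieldType) (V : finType) (ET : {set {set V}})
    (c : {set V} -> R) (v0 : V) (i : nat) (F : {set {set V}}) (L : {set V}) :
  is_tree ET ->
  (forall e, e \in ET -> 0 <= c e) ->
  is_center ET v0 ->
  (1 <= i <= height ET v0)%N ->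
  F \subset Blev ET v0 i ->
  forest_of_stars (Wlev ET v0 i) F ->
  star_leaves F L ->
  \sum_(v in L) ci ET c v0 v <= r_aux ET c v0 i F.
Proof.
(* Only the star structure of F and v0 \notin V_i (i.e. i >= 1) are needed. *)
move=> _ _ _ /andP[i_gt0 _] _ stars leaves.
exact: sum_ci_leaves_le_r_aux i_gt0 stars leaves.
Qed.
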